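(* Let $h:\{0,1\}^*\to\{0,1\}^*$ be the morphism defined by $h(0)=0110100110110010110$ and $h(1)=1001011001001101001$. (a) If $h(ab)=t\,h(c)\,u$ for some letters $a,b,c\in\{0,1\}$ and words $t,u\in\{0,1\}^*$, then $t=\epsilon$ or $u=\epsilon$. (b) If there exist letters $a,b,c\in\{0,1\}$ and words $s,t,u,v\in\{0,1\}^*$ such that $h(a)=st$, $h(b)=uv$ and $h(c)=sv$, then $a=c$ or $b=c$.
   Context: $\epsilon$ denotes the empty word. *)

From mathcomp Require Import all_boot.
Set Implicit Arguments. Unset Strict Implicit. Unset Printing Implicit Defensive.

(* Words over {0,1} are represented as [seq bool] with 0 = false, 1 = true. *)
Definition bits (s : seq nat) : seq bool := [seq (n == 1) | n <- s].

Definition h0 : seq bool := bits [:: 0;1;1;0;1;0;0;1;1;0;1;1;0;0;1;0;1;1;0].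
Definition h1 : seq bool := bits [:: 1;0;0;1;0;1;1;0;0;1;0;0;1;1;0;1;0;0;1].

Definition hl (a : bool) : seq bool := if a then h1 else h0.

Definition h (w : seq bool) : seq bool := flatten (map hl w).

From mathcomp Require Import all_boot.
From mathcomp Require Import zify.

Set Implicit Arguments.
Unset Strict Implicit.
Unset Printing Implicit Defensive.

(* Since h is 19-uniform, an occurrence of h(c) inside h(ab) is determined by
   its offset in [0, 19], and a splice s v of h(a) = s t and h(b) = u v by the
   length of s in [0, 19]; both statements thus reduce to finitely many cases,
   which are decided by computation. *)

Section Factors.

Variable T : eqType.

Lemma cat3_factor (w t x u : seq T) :
  w = t ++ x ++ u -> take (size x) (drop (size t) w) = x.
Proof. by move->; rewrite drop_size_cat // take_size_cat. Qed.

Lemma splice_take_drop (x y s t u v : seq T) :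
  x = s ++ t -> y = u ++ v -> size (s ++ v) = size y ->
  s ++ v = take (size s) x ++ drop (size s) y.
Proof.
move=> -> ->; rewrite !size_cat take_size_cat // => /eqP.
by rewrite eqn_add2r => /eqP ->; rewrite drop_size_cat.
Qed.

End Factors.

Lemma size_hl (c : bool) : size (hl c) = 19.
Proof. by case: c. Qed.

Lemma h_seq1 (c : bool) : h [:: c] = hl c.
Proof. by rewrite /h /= cats0. Qed.

Lemma size_h (w : seq bool) : size (h w) = 19 * size w.
Proof. by elim: w => //= a w IHw; rewrite size_cat size_hl IHw mulnS. Qed.

Lemma bool_in_seq (a : bool) : a \in [:: false; true].
Proof. by case: a. Qed.

Lemma h_inner_factor (a b c : bool) (k : nat) :
  0 < k < 19 -> take 19 (drop k (h [:: a; b])) != hl c.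
Proof.
move=> k_range.
have : all (fun a => all (fun b => all (fun c => all (fun k =>
          take 19 (drop k (h [:: a; b])) != hl c)
        (iota 1 18)) [:: false; true]) [:: false; true]) [:: false; true].
  by vm_compute.
move=> /allP/(_ a (bool_in_seq a))/allP/(_ b (bool_in_seq b)).
by move=> /allP/(_ c (bool_in_seq c))/allP; apply; rewrite mem_iota.
Qed.

Lemma hl_splice (a b c : bool) (k : nat) :
  k <= 19 -> hl c = take k (hl a) ++ drop k (hl b) -> a = c \/ b = c.
Proof.
move=> k_le19 E.
have : all (fun a => all (fun b => all (fun c => all (fun k =>
          (hl c == take k (hl a) ++ drop k (hl b)) ==> (a == c) || (b == c))
        (iota 0 20)) [:: false; true]) [:: false; true]) [:: false; true].
  by vm_compute.
move=> /allP/(_ a (bool_in_seq a))/allP/(_ b (bool_in_seq b)).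
move=> /allP/(_ c (bool_in_seq c))/allP/(_ k); rewrite mem_iota ltnS k_le19 E eqxx.
by move=> /(_ isT)/orP[/eqP | /eqP]; [left | right].
Qed.

Theorem lemma12 :
  (forall (a b c : bool) (t u : seq bool),
      h [:: a; b] = t ++ h [:: c] ++ u -> t = [::] \/ u = [::]) /\
  (forall (a b c : bool) (s t u v : seq bool),
      h [:: a] = s ++ t -> h [:: b] = u ++ v -> h [:: c] = s ++ v ->
      a = c \/ b = c).
Proof.
split.
- move=> a b c t u; rewrite h_seq1 => E.
  have sizeE := congr1 size E.
  rewrite size_h !size_cat size_hl in sizeE.
  case: t E sizeE => [|x t] E sizeE; first by left.
  case: u E sizeE => [|y u] E sizeE; first by right.
  have offset : 0 < size (x :: t) < 19 by move: sizeE => /=; lia.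
  have := cat3_factor E; rewrite size_hl => factor.
  by have := h_inner_factor a b c offset; rewrite factor eqxx.
- move=> a b c s t u v; rewrite !h_seq1 => Ea Eb Ec.
  have size_s : size s <= 19 by rewrite -(size_hl a) Ea size_cat leq_addr.
  apply: (hl_splice size_s); rewrite Ec.
  by apply: splice_take_drop Ea Eb _; rewrite -Ec !size_hl.
Qed.
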